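(* Let $Y\in\mathbb{R}^{N\times M}$, $k\ge1$, and $\alpha,\nu,\gamma\ge0$. Consider $$\min_{A\in\mathbb{R}^{N\times k},\,P\in\mathbb{R}^{k\times M},\ A\ge0,\ P\ge0} J(A,P):=\|Y-AP\|_{F,2}^2+\alpha\|A\|_{F,1}+\nu\|P\|_{F,1}+\gamma\|PP^T-I\|_{F,1},$$ where $I$ is the $k\times k$ identity. If $(A,P)$ is a (local) minimizer of this problem, then for any constants $c_1,c_2>0$ there exist matrices $L\in\mathbb{R}^{k\times k}$, $\mu_A,\lambda_A\in\mathbb{R}^{N\times k}$, $\mu_P,\lambda_P\in\mathbb{R}^{k\times M}$, $\lambda_L\in\mathbb{R}^{k\times k}$ such that $$\begin{cases} 0=2APP^T-2YP^T+\mu_A+\alpha\lambda_A,\\ \lambda_A=\dfrac{\lambda_A+c_2A}{\max(1,|\lambda_A+c_2A|)},\\ \mu_A=\min(\mu_A+c_1A,0),\\ 0=-2A^TY+2A^TAP+\mu_P+\nu\lambda_P+\gamma(\lambda_L+\lambda_L^T)P,\\ \lambda_P=\dfrac{\lambda_P+c_2P}{\max(1,|\lambda_P+c_2P|)},\\ L=PP^T-I,\\ \lambda_L=\dfrac{\lambda_L+c_2L}{\max(1,|\lambda_L+c_2L|)},\\ \mu_P=\min(\mu_P+c_1P,0), \end{cases}$$ where division, maximum, minimum and absolute value are taken entrywise.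
   Context: For a matrix $X$, $\|X\|_{F,2}=\sqrt{\sum_{i,j}|X_{ij}|^2}$ and $\|X\|_{F,1}=\sum_{i,j}|X_{ij}|$; $A\ge0$ means entrywise nonnegativity. Necessary optimality is understood in the sense of generalized (Clarke) subdifferential calculus for this nonsmooth, nonconvex problem. *)

From HB Require Import structures.
From mathcomp Require Import all_boot all_order all_algebra.
From mathcomp Require Import reals.
Set Implicit Arguments. Unset Strict Implicit. Unset Printing Implicit Defensive.
Import Order.TTheory GRing.Theory Num.Theory.
Local Open Scope ring_scope.

Definition mx_nonneg (R : realType) m n (X : 'M[R]_(m, n)) : Prop :=
  forall i j, 0 <= X i j.

Definition frob2sq (R : realType) m n (X : 'M[R]_(m, n)) : R :=
  \sum_(i < m) \sum_(j < n) (X i j) ^+ 2.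

Definition frob1 (R : realType) m n (X : 'M[R]_(m, n)) : R :=
  \sum_(i < m) \sum_(j < n) `|X i j|.

Definition Jobj (R : realType) N M k (Y : 'M[R]_(N, M))
  (alpha nu gamma : R) (A : 'M[R]_(N, k)) (P : 'M[R]_(k, M)) : R :=
  frob2sq (Y - A *m P) + alpha * frob1 A + nu * frob1 P
  + gamma * frob1 (P *m P^T - 1%:M).

Definition local_minimizer (R : realType) N M k (Y : 'M[R]_(N, M))
  (alpha nu gamma : R) (A : 'M[R]_(N, k)) (P : 'M[R]_(k, M)) : Prop :=
  mx_nonneg A /\ mx_nonneg P /\
  exists eps : R, 0 < eps /\
    forall (A' : 'M[R]_(N, k)) (P' : 'M[R]_(k, M)),
      mx_nonneg A' -> mx_nonneg P' ->
      (forall i j, `|A' i j - A i j| < eps) ->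
      (forall i j, `|P' i j - P i j| < eps) ->
      Jobj Y alpha nu gamma A P <= Jobj Y alpha nu gamma A' P'.

Definition proj_box (R : realType) m n (c : R) (X Z : 'M[R]_(m, n)) : 'M[R]_(m, n) :=
  \matrix_(i, j) ((X i j + c * Z i j) / Num.max 1 `|X i j + c * Z i j|).

Definition min0 (R : realType) m n (c : R) (X Z : 'M[R]_(m, n)) : 'M[R]_(m, n) :=
  \matrix_(i, j) Num.min (X i j + c * Z i j) 0.

From HB Require Import structures.
From mathcomp Require Import all_boot all_order all_algebra.
From mathcomp Require Import reals ring lra.
Set Implicit Arguments. Unset Strict Implicit. Unset Printing Implicit Defensive.
Import Order.TTheory GRing.Theory Num.Theory.
Local Open Scope ring_scope.

(* Let [dJ] be the one-sided directional derivative of [J] at the minimizer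
   [(A, P)]. Since [J (A + s DA) (P + s DP) <= J A P + s * dJ + O(s^2)] and
   local minimality bounds the left side below by [J A P] for small feasible
   steps, [dJ] is nonnegative along every feasible direction. Elementary
   directions then give all the sign information. In [A]: the gradient plus
   [alpha] is nonnegative, and zero where [A > 0], so [lamA = 1] and
   [muA = - (gradient + alpha)] work. In [P], with [lamP = 1] and [lamL] the
   sign of [L = P P^T - I] where it is defined, the resulting gradient
   [gradP] is nonnegative off the support of [P] and vanishes on it, except
   in rows [a] with [|P_a| = 1]. There [|gradP| <= 2 gamma P], and shifting
   mass between two entries of the row shows that [gradP_a] is parallel to
   [P_a]; the ratio is the missing diagonal entry of [lamL], of modulus at
   most 1. *)

Section RealFacts.
Variable R : realFieldType.
Implicit Types (a b c d e s x y : R) (f g : R -> R).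

(* Right derivative of [|.|] at [x] in direction [d]. *)
Definition dabs x d : R := if x == 0 then `|d| else Num.sg x * d.

Lemma dabs0 x : dabs x 0 = 0.
Proof. by rewrite /dabs normr0 mulr0; case: ifP. Qed.

Lemma dabs_gt0 x e : 0 < x -> dabs x e = e.
Proof. by move=> x0; rewrite /dabs gt_eqF // gtr0_sg // mul1r. Qed.

Lemma dabs_ge0 x e : 0 <= x -> 0 <= e -> dabs x e = e.
Proof.
rewrite le_eqVlt => /orP[/eqP<- e0|/dabs_gt0//].
by rewrite /dabs eqxx ger0_norm.
Qed.

Definition upper_expansion f a b : Prop :=
  exists K, forall s, 0 < s -> s <= 1 -> f s <= a + b * s + K * s ^+ 2.

Lemma upper_expansion_ext f g a b :
  (forall s, 0 < s -> s <= 1 -> f s = g s) ->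
  upper_expansion g a b -> upper_expansion f a b.
Proof. by move=> fg [K HK]; exists K => s s0 s1; rewrite fg //; apply: HK. Qed.

Lemma upper_expansionD f g a b c d :
  upper_expansion f a b -> upper_expansion g c d ->
  upper_expansion (fun s => f s + g s) (a + c) (b + d).
Proof.
move=> [K1 H1] [K2 H2]; exists (K1 + K2) => s s0 s1.
by have := H1 s s0 s1; have := H2 s s0 s1; lra.
Qed.

Lemma upper_expansionZ f a b c : 0 <= c ->
  upper_expansion f a b -> upper_expansion (fun s => c * f s) (c * a) (c * b).
Proof.
move=> c0 [K HK]; exists (c * K) => s s0 s1.
have := ler_wpM2l c0 (HK s s0 s1); rewrite !mulrDr !mulrA; lra.
Qed.

Lemma upper_expansion_sum n (F : 'I_n -> R -> R) (a b : 'I_n -> R) :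
  (forall i, upper_expansion (F i) (a i) (b i)) ->
  upper_expansion (fun s => \sum_(i < n) F i s)
    (\sum_(i < n) a i) (\sum_(i < n) b i).
Proof.
move=> H; have [K HK] := fin_all_exists H.
exists (\sum_(i < n) K i) => s s0 s1.
rewrite !mulr_suml -!big_split /=.
by apply: ler_sum => i _; apply: HK.
Qed.

Lemma sqr_upper_expansion a b c :
  upper_expansion (fun s => (a + b * s + c * s ^+ 2) ^+ 2) (a ^+ 2) (2 * a * b).
Proof.
exists (b ^+ 2 + 2 * `|a| * `|c| + 2 * `|b| * `|c| + c ^+ 2) => s s0 s1.
have ac : a * c <= `|a| * `|c| by rewrite -normrM ler_norm.
have bc : b * c * s <= `|b| * `|c|.
  apply: le_trans (_ : `|b * c * s| <= _); first exact: ler_norm.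
  by rewrite !normrM (gtr0_norm s0) ler_piMr // mulr_ge0.
have c2 : c ^+ 2 * s ^+ 2 <= c ^+ 2.
  by rewrite ler_piMr ?sqr_ge0 // expr_le1 // ltW.
have s2 : 0 < s ^+ 2 by rewrite exprn_gt0.
rewrite !expr2 in c2 s2 *; nra.
Qed.

Lemma normD_le_sg a y : a != 0 -> `|a + y| <= `|a| + Num.sg a * y + 2 * y ^+ 2 / `|a|.
Proof.
move=> a_neq0; wlog a0 : a y a_neq0 / 0 < a => [hwlog|].
  have [a0|a0] : a < 0 \/ 0 < a by apply/orP; rewrite -neq_lt.
    have := hwlog (- a) (- y); rewrite oppr_eq0 oppr_gt0 -opprD !normrN sgrN sqrrN.
    by rewrite mulrNN; apply.
  exact: hwlog.
rewrite gtr0_sg // mul1r (gtr0_norm a0).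
have y2 : 0 <= 2 * y ^+ 2 / a by rewrite divr_ge0 ?(ltW a0) // mulr_ge0 // sqr_ge0.
case: (lerP 0 (a + y)) => ay; first by rewrite ger0_norm // lerDl.
have : - (a + y) <= y ^+ 2 / a by rewrite ler_pdivlMr // expr2; nra.
rewrite ltr0_norm //; lra.
Qed.

Lemma norm_upper_expansion a b c :
  upper_expansion (fun s => `|a + b * s + c * s ^+ 2|) `|a| (dabs a b).
Proof.
rewrite /dabs; case: eqP => [->|/eqP a0].
  exists `|c| => s s0 _; rewrite add0r normr0 add0r.
  by apply: le_trans (ler_normD _ _) _; rewrite !normrM (gtr0_norm s0) -expr2.
exists (`|c| + 2 * (`|b| + `|c|) ^+ 2 / `|a|) => s s0 s1.
rewrite -addrA; apply: le_trans (normD_le_sg _ a0) _.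
set y := b * s + c * s ^+ 2.
have ss : s ^+ 2 <= s by rewrite expr2 ler_piMr // ltW.
have ys : `|y| <= (`|b| + `|c|) * s.
  apply: le_trans (ler_normD _ _) _; rewrite !normrM (gtr0_norm s0) -expr2.
  by rewrite mulrDl lerD2l ler_wpM2l.
have y2 : y ^+ 2 <= (`|b| + `|c|) ^+ 2 * s ^+ 2.
  by rewrite -real_normK ?num_real // !expr2 mulrACA ler_pM.
have sgy : Num.sg a * y <= Num.sg a * b * s + `|c| * s ^+ 2.
  rewrite /y mulrDr mulrA lerD2l mulrA.
  apply: le_trans (ler_norm _) _.
  by rewrite !normrM normr_sg a0 mul1r (gtr0_norm s0) -expr2.
have a_gt0 : 0 < `|a|^-1 by rewrite invr_gt0 normr_gt0.
have := ler_wpM2r (ltW a_gt0) y2; rewrite mulrDl; nra.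
Qed.

Lemma upper_expansion_slope_ge0 f a b delta : 0 < delta ->
  upper_expansion f a b -> (forall s, 0 < s -> s < delta -> a <= f s) -> 0 <= b.
Proof.
move=> d0 [K HK] fmin; rewrite leNgt; apply/negP => b0.
have K1 : 0 < `|K| + 1 by rewrite ltr_pwDr ?normr_ge0.
set s := Num.min (delta / 2) (Num.min 1 (- b / (2 * (`|K| + 1)))).
have s0 : 0 < s by rewrite !lt_min divr_gt0 //= ?ltr01 ?divr_gt0 ?mulr_gt0 // oppr_gt0.
have sd : s < delta by rewrite /s gt_min ltr_pdivrMr //; apply/orP; left; lra.
have s1 : s <= 1 by rewrite /s !ge_min lexx orbT.
have sb : s * (2 * (`|K| + 1)) <= - b.
  by rewrite -ler_pdivlMr ?mulr_gt0 // /s !ge_min lexx !orbT.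
have := fmin s s0 sd; have := HK s s0 s1.
have KK : K <= `|K| + 1 by have := ler_norm K; lra.
have : K * s ^+ 2 <= (`|K| + 1) * s ^+ 2 by apply: ler_wpM2r KK; apply: sqr_ge0.
rewrite expr2; nra.
Qed.

Lemma proj_sg_fixed c z : 0 < c ->
  Num.sg z = (Num.sg z + c * z) / Num.max 1 `|Num.sg z + c * z|.
Proof.
move=> c0; case: (ltrgt0P z) => [z0|z0|->]; last by rewrite sgr0 mulr0 addr0 mul0r.
  have cz : 1 <= 1 + c * z by rewrite lerDl mulr_ge0 // ltW.
  by rewrite gtr0_sg // ger0_norm ?max_r ?divff // ?gt_eqF; lra.
have cz : c * z < 0 by rewrite pmulr_rlt0.
rewrite ltr0_sg // ler0_norm; last lra.
rewrite max_r; last lra.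
by rewrite invrN mulrN divff // ltr0_neq0 //; lra.
Qed.

Lemma proj_zero_fixed c l : `|l| <= 1 -> l = (l + c * 0) / Num.max 1 `|l + c * 0|.
Proof. by move=> l1; rewrite mulr0 addr0 max_l // divr1. Qed.

Lemma min0_fixed c mu z : 0 < c -> mu <= 0 -> 0 <= z -> (0 < z -> mu = 0) ->
  mu = Num.min (mu + c * z) 0.
Proof.
move=> c0 mu0; rewrite le_eqVlt => /orP[/eqP<- _|z0 /(_ z0)->].
  by rewrite mulr0 addr0 min_l.
by rewrite add0r min_r // mulr_ge0 // ltW.
Qed.

End RealFacts.

Section FrobeniusDot.
Variable R : comPzRingType.

Definition frob_dot m n (X Z : 'M[R]_(m, n)) : R := \tr (X *m Z^T).

Variables m n p : nat.
Implicit Types X Z : 'M[R]_(m, n).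

Lemma frob_dotE X Z : frob_dot X Z = \sum_i \sum_j X i j * Z i j.
Proof.
by apply: eq_bigr => i _; rewrite mxE; apply: eq_bigr => j _; rewrite mxE.
Qed.

Lemma frob_dotDl X1 X2 Z : frob_dot (X1 + X2) Z = frob_dot X1 Z + frob_dot X2 Z.
Proof. by rewrite /frob_dot mulmxDl mxtraceD. Qed.

Lemma frob_dotDr X Z1 Z2 : frob_dot X (Z1 + Z2) = frob_dot X Z1 + frob_dot X Z2.
Proof. by rewrite /frob_dot linearD mulmxDr mxtraceD. Qed.

Lemma frob_dotZl a X Z : frob_dot (a *: X) Z = a * frob_dot X Z.
Proof. by rewrite /frob_dot -scalemxAl mxtraceZ. Qed.

Lemma frob_dotZr a X Z : frob_dot X (a *: Z) = a * frob_dot X Z.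
Proof. by rewrite /frob_dot linearZ -scalemxAr mxtraceZ. Qed.

Lemma frob_dotNl X Z : frob_dot (- X) Z = frob_dot X (- Z).
Proof. by rewrite /frob_dot linearN mulNmx mulmxN. Qed.

Lemma frob_dot_delta X i j : frob_dot X (delta_mx i j) = X i j.
Proof.
rewrite frob_dotE (bigD1 i) //= (bigD1 j) //= !mxE !eqxx mulr1.
rewrite !big1 ?addr0 // => [a ai|b bj]; last by rewrite mxE (negbTE bj) andbF mulr0.
by apply: big1 => b _; rewrite mxE (negbTE ai) mulr0.
Qed.

Lemma mul_delta_mxE (Z : 'M[R]_(p, n)) (c : 'I_m) l a b :
  (delta_mx c l *m Z) a b = (a == c)%:R * Z l b.
Proof.
rewrite mxE (bigD1 l) //= big1 ?addr0 => [|j jl]; first by rewrite mxE eqxx andbT.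
by rewrite mxE (negbTE jl) andbF mul0r.
Qed.

Lemma frob_dot_mulmxl X (U : 'M[R]_(m, p)) (V : 'M[R]_(p, n)) :
  frob_dot X (U *m V) = frob_dot (X *m V^T) U.
Proof. by rewrite /frob_dot trmx_mul mulmxA. Qed.

Lemma frob_dot_mulmxr X (U : 'M[R]_(m, p)) (V : 'M[R]_(p, n)) :
  frob_dot (U^T *m X) V = frob_dot X (U *m V).
Proof. by rewrite /frob_dot trmx_mul -mulmxA mxtrace_mulC mulmxA. Qed.

Lemma frob_dot_trr X (Z : 'M[R]_(n, m)) : frob_dot X Z^T = frob_dot X^T Z.
Proof. by rewrite /frob_dot (trmxK Z) -trmx_mul mxtrace_tr mxtrace_mulC. Qed.

Lemma mulmx_perturb (X U : 'M[R]_(m, p)) (Z V : 'M[R]_(p, n)) s :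
  (X + s *: U) *m (Z + s *: V) =
  X *m Z + s *: (U *m Z + X *m V) + s ^+ 2 *: (U *m V).
Proof.
rewrite mulmxDl !mulmxDr -!scalemxAl -!scalemxAr scalerA -expr2 scalerDr.
by rewrite -!addrA; congr (_ + _); apply: addrCA.
Qed.

End FrobeniusDot.

Section RealMatrices.
Variable R : realType.
Variables m n : nat.
Implicit Types X U V D : 'M[R]_(m, n).

Definition frob1_deriv X D : R := \sum_i \sum_j dabs (X i j) (D i j).

Lemma frob2sq_upper_expansion X U V :
  upper_expansion (fun s => frob2sq (X + s *: U + s ^+ 2 *: V))
    (frob2sq X) (frob_dot (2 *: X) U).
Proof.
have -> : frob_dot (2 *: X) U = \sum_i \sum_j 2 * X i j * U i j.
  by rewrite frob_dotE; apply: eq_bigr => i _; apply: eq_bigr => j _; rewrite mxE.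
apply: upper_expansion_ext (upper_expansion_sum (fun i => upper_expansion_sum
  (fun j => sqr_upper_expansion (X i j) (U i j) (V i j)))) => s _ _.
by apply: eq_bigr => i _; apply: eq_bigr => j _; rewrite !mxE (mulrC s) (mulrC (s ^+ 2)).
Qed.

Lemma frob1_upper_expansion X U V :
  upper_expansion (fun s => frob1 (X + s *: U + s ^+ 2 *: V)) (frob1 X) (frob1_deriv X U).
Proof.
apply: upper_expansion_ext (upper_expansion_sum (fun i => upper_expansion_sum
  (fun j => norm_upper_expansion (X i j) (U i j) (V i j)))) => s _ _.
by apply: eq_bigr => i _; apply: eq_bigr => j _; rewrite !mxE (mulrC s) (mulrC (s ^+ 2)).
Qed.

Lemma frob1_deriv0 X : frob1_deriv X 0 = 0.
Proof.
by apply: big1 => i _; apply: big1 => j _; rewrite mxE dabs0.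
Qed.

Lemma frob1_deriv_delta X i j e : frob1_deriv X (e *: delta_mx i j) = dabs (X i j) e.
Proof.
rewrite /frob1_deriv (bigD1 i) //= (bigD1 j) //= !mxE !eqxx mulr1.
rewrite !big1 ?addr0 // => [a ai|b bj]; last by rewrite !mxE (negbTE bj) andbF mulr0 dabs0.
by apply: big1 => b _; rewrite !mxE (negbTE ai) mulr0 dabs0.
Qed.

Lemma frob1_ge0 X : 0 <= frob1 X.
Proof. by apply: sumr_ge0 => i _; apply: sumr_ge0. Qed.

Lemma normr_le_frob1 X i j : `|X i j| <= frob1 X.
Proof.
rewrite /frob1 (bigD1 i) //= (bigD1 j) //= -addrA lerDl.
by apply: addr_ge0; apply: sumr_ge0 => a _ //; apply: sumr_ge0.
Qed.

Lemma mx_nonneg_segment X D t s :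
  mx_nonneg X -> mx_nonneg (X + t *: D) -> 0 <= s <= t -> mx_nonneg (X + s *: D).
Proof.
move=> X0 XD0 /andP[s0 st] i j; have := XD0 i j; have := X0 i j; rewrite !mxE.
case: (lerP 0 (D i j)) => D0; last nra.
by move=> *; rewrite addr_ge0 // mulr_ge0.
Qed.

Lemma mx_nonneg_add_delta X e i j :
  mx_nonneg X -> 0 <= X i j + e -> mx_nonneg (X + e *: delta_mx i j).
Proof.
move=> X0 Xe a b; rewrite !mxE.
case: (eqVneq a i) => [->|]; case: (eqVneq b j) => [->|] //= *;
  by rewrite ?mulr0 ?addr0 ?mulr1 //; apply: X0.
Qed.

Lemma mx_nonneg_step_in_supp X D :
  mx_nonneg X -> (forall i j, X i j = 0 -> D i j = 0) ->
  exists2 t, 0 < t & mx_nonneg (X + t *: D).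
Proof.
move=> X0 XD; pose ratio (ij : 'I_m * 'I_n) :=
  if D ij.1 ij.2 < 0 then X ij.1 ij.2 / - D ij.1 ij.2 else 1.
have t0 : 0 < \big[Num.min/1]_ij ratio ij.
  apply: lt_bigmin => // -[i j] _; rewrite /ratio /=; case: ifPn => // Dij.
  rewrite divr_gt0 ?oppr_gt0 // lt_neqAle X0 andbT eq_sym.
  by apply: contraTneq Dij => /XD->; rewrite ltxx.
exists (\big[Num.min/1]_ij ratio ij) => // i j.
have := bigmin_le 1 (i, j) ratio; rewrite !mxE /ratio /=.
case: ltrP => Dij; last by move=> _; rewrite addr_ge0 ?X0 // mulr_ge0 // ltW.
by rewrite ler_pdivlMr ?oppr_gt0 // mulrN lerNl -subr_ge0 opprK addrC.
Qed.

Lemma proj_box_const1 c X :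
  0 < c -> mx_nonneg X -> const_mx 1 = proj_box c (const_mx 1) X.
Proof.
move=> c0 X0; apply/matrixP => i j; rewrite !mxE.
have := X0 i j; rewrite le_eqVlt => /orP[/eqP<-|Xij].
  by rewrite -proj_zero_fixed ?normr1.
by have := proj_sg_fixed (X i j) c0; rewrite gtr0_sg.
Qed.

End RealMatrices.

Section LocalMinimizer.
Variables (R : realType) (N M k : nat) (Y : 'M[R]_(N, M)) (alpha nu gamma : R).
Variables (A : 'M[R]_(N, k)) (P : 'M[R]_(k, M)).
Hypotheses (alpha_ge0 : 0 <= alpha) (nu_ge0 : 0 <= nu) (gamma_ge0 : 0 <= gamma).
Hypothesis APmin : local_minimizer Y alpha nu gamma A P.

Implicit Types (DA : 'M[R]_(N, k)) (D DP : 'M[R]_(k, M)).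

Local Notation J := (Jobj Y alpha nu gamma).
Local Notation L := (P *m P^T - 1%:M).

Let A_ge0 : mx_nonneg A. Proof. by case: APmin. Qed.
Let P_ge0 : mx_nonneg P. Proof. by case: APmin => _ []. Qed.

(* Gradient of [X |-> frob2sq (Y - X)] at [X = A P]. *)
Definition misfit_grad : 'M[R]_(N, M) := 2 *: (A *m P - Y).

Definition dL D : 'M[R]_k := D *m P^T + P *m D^T.

Definition dJ DA DP : R :=
  frob_dot misfit_grad (DA *m P + A *m DP) + alpha * frob1_deriv A DA
  + nu * frob1_deriv P DP + gamma * frob1_deriv L (dL DP).

Lemma Jobj_upper_expansion DA DP :
  upper_expansion (fun s => J (A + s *: DA) (P + s *: DP)) (J A P) (dJ DA DP).
Proof.
have resE s : Y - (A + s *: DA) *m (P + s *: DP) =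
    Y - A *m P + s *: - (DA *m P + A *m DP) + s ^+ 2 *: - (DA *m DP).
  by rewrite mulmx_perturb !scalerN !opprD !addrA.
have LE s : (P + s *: DP) *m (P + s *: DP)^T - 1%:M =
    L + s *: dL DP + s ^+ 2 *: (DP *m DP^T).
  by rewrite linearD linearZ /= mulmx_perturb addrAC; congr (_ + _); apply: addrAC.
have gradE : frob_dot (2 *: (Y - A *m P)) (- (DA *m P + A *m DP)) =
    frob_dot misfit_grad (DA *m P + A *m DP).
  by rewrite -frob_dotNl -scalerN opprB.
rewrite /dJ -gradE.
apply: upper_expansion_ext (upper_expansionD (upper_expansionD (upper_expansionD
  (frob2sq_upper_expansion _ _ _)
  (upper_expansionZ alpha_ge0 (frob1_upper_expansion A DA 0)))
  (upper_expansionZ nu_ge0 (frob1_upper_expansion P DP 0)))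
  (upper_expansionZ gamma_ge0 (frob1_upper_expansion L (dL DP) (DP *m DP^T)))) => s _ _.
by rewrite /Jobj resE LE !scaler0 !addr0.
Qed.

Lemma dJ_ge0 DA DP t : 0 < t ->
  mx_nonneg (A + t *: DA) -> mx_nonneg (P + t *: DP) -> 0 <= dJ DA DP.
Proof.
case: APmin => _ [_ [eps [eps0 Jmin]]] t0 At Pt.
set B := frob1 DA + frob1 DP + 1.
have B0 : 0 < B by rewrite ltr_wpDl ?addr_ge0 ?frob1_ge0.
apply: (upper_expansion_slope_ge0 (delta := Num.min t (eps / B)))
  (Jobj_upper_expansion DA DP) _; first by rewrite lt_min t0 divr_gt0.
move=> s s0; rewrite lt_min => /andP[st sB].
have sBe : s * B < eps by rewrite -ltr_pdivlMr.
have small_step i j (D : 'M[R]_(i, j)) a b : frob1 D <= B -> `|(s *: D) a b| < eps.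
  move=> DB; rewrite mxE normrM (gtr0_norm s0); apply: le_lt_trans sBe.
  by apply: ler_wpM2l; [exact: ltW | exact: le_trans (normr_le_frob1 _ _ _) DB].
apply: Jmin.
- by apply: mx_nonneg_segment A_ge0 At _; rewrite ltW //= ltW.
- by apply: mx_nonneg_segment P_ge0 Pt _; rewrite ltW //= ltW.
- move=> i j; rewrite mxE addrAC subrr add0r; apply: small_step.
  by rewrite /B; have := frob1_ge0 DP; lra.
- move=> i j; rewrite mxE addrAC subrr add0r; apply: small_step.
  by rewrite /B; have := frob1_ge0 DA; lra.
Qed.

Lemma dJ_deltaA i j e :
  dJ (e *: delta_mx i j) 0 = e * (misfit_grad *m P^T) i j + alpha * dabs (A i j) e.
Proof.
rewrite /dJ /dL mulmx0 addr0 mul0mx trmx0 mulmx0 addr0 !frob1_deriv0 !mulr0 !addr0.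
by rewrite frob_dot_mulmxl frob_dotZr frob_dot_delta frob1_deriv_delta.
Qed.

Lemma gradA_alpha_ge0 i j : 0 <= (misfit_grad *m P^T) i j + alpha.
Proof.
have := @dJ_ge0 (1 *: delta_mx i j) 0 1 ltr01.
rewrite dJ_deltaA dabs_ge0 // mul1r mulr1; apply.
  by rewrite scale1r; apply: mx_nonneg_add_delta => //; rewrite addr_ge0.
by rewrite scaler0 addr0.
Qed.

Lemma gradA_alpha_eq0 i j : 0 < A i j -> (misfit_grad *m P^T) i j + alpha = 0.
Proof.
move=> Aij; have := @dJ_ge0 ((-1) *: delta_mx i j) 0 (A i j) Aij.
rewrite dJ_deltaA dabs_gt0 // scalerA mulrN1 scaler0 addr0 => dJ0.
have feas : mx_nonneg (A + - A i j *: delta_mx i j).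
  by apply: mx_nonneg_add_delta; rewrite ?subrr.
by have := dJ0 feas P_ge0; have := gradA_alpha_ge0 i j; lra.
Qed.

(* The sign of [L], with [1] at its off-diagonal zeros: there the rows of
   [P] have disjoint supports, so [dL D] vanishes for [D] supported in that of
   [P] and is nonnegative for [D >= 0]. The diagonal zeros are filled by [tau]. *)
Definition lamL0 : 'M[R]_k :=
  \matrix_(a, b) if L a b == 0 then (a != b)%:R else Num.sg (L a b).

Definition gradP : 'M[R]_(k, M) :=
  A^T *m misfit_grad + nu *: const_mx 1 + gamma *: ((lamL0 + lamL0^T) *m P).

Lemma dJ_dirP D :
  (forall i j, P i j = 0 -> 0 <= D i j) ->
  (forall a b, a != b -> L a b = 0 -> 0 <= dL D a b) ->
  dJ 0 D = frob_dot gradP D + gamma * \sum_a (if L a a == 0 then `|dL D a a| else 0).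
Proof.
move=> D_ge0 dL_ge0.
have nuE : frob1_deriv P D = frob_dot (const_mx 1) D.
  rewrite frob_dotE; apply: eq_bigr => i _; apply: eq_bigr => j _; rewrite mxE mul1r.
  have := P_ge0 i j; rewrite le_eqVlt => /orP[/eqP Pij|/dabs_gt0//].
  by rewrite -Pij dabs_ge0 // D_ge0.
have gammaE : frob1_deriv L (dL D) =
    frob_dot lamL0 (dL D) + \sum_a (if L a a == 0 then `|dL D a a| else 0).
  transitivity (\sum_a \sum_b (lamL0 a b * dL D a b +
      (if (a == b) && (L a b == 0) then `|dL D a b| else 0))).
    apply: eq_bigr => a _; apply: eq_bigr => b _; rewrite [lamL0 a b]mxE /dabs.
    case: eqP => [Lab|_]; last by rewrite andbF addr0.
    case: (eqVneq a b) => [->|ab] /=; first by rewrite mul0r add0r.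
    by rewrite mul1r addr0 ger0_norm // dL_ge0.
  rewrite frob_dotE -big_split; apply: eq_bigr => a _; rewrite big_split /=.
  congr (_ + _); rewrite (bigD1 a) //= eqxx big1 ?addr0 // => b.
  by rewrite eq_sym => /negbTE->.
have gradE : frob_dot misfit_grad (A *m D) = frob_dot (A^T *m misfit_grad) D.
  by rewrite frob_dot_mulmxr.
have lamE1 : frob_dot lamL0 (D *m P^T) = frob_dot (lamL0 *m P) D.
  by rewrite frob_dot_mulmxl (trmxK P).
have lamE2 : frob_dot lamL0 (P *m D^T) = frob_dot (lamL0^T *m P) D.
  by rewrite -frob_dot_mulmxr frob_dot_trr trmx_mul (trmxK P).
rewrite /dJ mul0mx add0r frob1_deriv0 mulr0 addr0 nuE gammaE gradE.
rewrite {1}/dL frob_dotDr lamE1 lamE2 /gradP mulmxDl !frob_dotDl !frob_dotZl frob_dotDl.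
ring.
Qed.

Lemma dL_diag D a : dL D a a = 2 * (D *m P^T) a a.
Proof.
have -> : dL D = D *m P^T + (D *m P^T)^T by rewrite trmx_mul (trmxK P).
by rewrite mxE [_^T a a]mxE mulr2n mulrDl mul1r.
Qed.

Lemma dL_offdiag D a b : (forall i j, P i j = 0 -> D i j = 0) ->
  a != b -> L a b = 0 -> dL D a b = 0.
Proof.
move=> DP ab; rewrite !mxE (negbTE ab) subr0 => PPab.
have Pab j : P a j = 0 \/ P b j = 0.
  have /eqP : P a j * P b j = 0.
    have -> : P b j = P^T j b by rewrite mxE.
    by apply: (psumr_eq0P _ PPab) => // l _; rewrite mxE mulr_ge0.
  by rewrite mulf_eq0 => /orP[/eqP|/eqP]; [left|right].
by rewrite !big1 ?addr0 // => j _; rewrite mxE;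
  case: (Pab j) => Pj; rewrite ?Pj ?(DP _ _ Pj) ?mulr0 ?mul0r.
Qed.

Lemma dJ_dirP_supp_ge0 D : (forall i j, P i j = 0 -> D i j = 0) ->
  0 <= frob_dot gradP D
       + 2 * gamma * \sum_a (if L a a == 0 then `|(D *m P^T) a a| else 0).
Proof.
move=> DP; have [t t0 Pt] := mx_nonneg_step_in_supp P_ge0 DP.
have <- : dJ 0 D = frob_dot gradP D
    + 2 * gamma * \sum_a (if L a a == 0 then `|(D *m P^T) a a| else 0).
  rewrite dJ_dirP => [|i j /DP->//|a b ab Lab]; last by rewrite dL_offdiag.
  rewrite [2 * gamma]mulrC -mulrA; congr (_ + _ * _); rewrite mulr_sumr.
  by apply: eq_bigr => a _; rewrite dL_diag normrM ger0_norm //; case: ifP; rewrite ?mulr0.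
by apply: dJ_ge0 t0 _ Pt; rewrite scaler0 addr0.
Qed.

Lemma gradP_ge0_offsupp c m : P c m = 0 -> 0 <= gradP c m.
Proof.
move=> Pcm; have := @dJ_ge0 0 (delta_mx c m) 1 ltr01.
rewrite scaler0 addr0 scale1r => /(_ A_ge0).
have Pdelta : mx_nonneg (P + delta_mx c m).
  by rewrite -[delta_mx c m]scale1r; apply: mx_nonneg_add_delta; rewrite ?Pcm ?add0r.
rewrite dJ_dirP => [/(_ Pdelta)|i j _|a b _ _]; first last.
- by rewrite !mxE addr_ge0 // sumr_ge0 // => l _; rewrite !mxE mulr_ge0 ?ler0n.
- by rewrite mxE ler0n.
rewrite frob_dot_delta big1 ?mulr0 ?addr0 // => a _.
rewrite dL_diag mul_delta_mxE [P^T _ _]mxE.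
by case: (eqVneq a c) => [->|_] /=; rewrite ?Pcm ?(mulr0, mul0r) ?normr0; case: ifP.
Qed.

Lemma offsupp_neq c m i j : 0 < P c m -> P i j = 0 -> (i == c) && (j == m) = false.
Proof.
move=> Pcm Pij; apply/negbTE/andP => -[/eqP ic /eqP jm].
by move: Pcm; rewrite -ic -jm Pij ltxx.
Qed.

Lemma delta_mul_trP_diag e c m a :
  ((e *: delta_mx c m) *m P^T) a a = if a == c then e * P c m else 0.
Proof.
rewrite -scalemxAl mxE mul_delta_mxE [P^T _ _]mxE.
by case: (eqVneq a c) => [->|_]; rewrite ?mul1r //= mul0r mulr0.
Qed.

Lemma gradP_bound c m : 0 < P c m ->
  `|gradP c m| <= (if L c c == 0 then 2 * gamma * P c m else 0).
Proof.
move=> Pcm.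
have dir e : 0 <= e * gradP c m + `|e| * (if L c c == 0 then 2 * gamma * P c m else 0).
  have := @dJ_dirP_supp_ge0 (e *: delta_mx c m).
  rewrite frob_dotZr frob_dot_delta (bigD1 c) //= big1 => [|a /negbTE ac]; last first.
    by rewrite delta_mul_trP_diag ac normr0; case: ifP.
  rewrite addr0 delta_mul_trP_diag eqxx normrM (gtr0_norm Pcm).
  have -> : `|e| * (if L c c == 0 then 2 * gamma * P c m else 0) =
      2 * gamma * (if L c c == 0 then `|e| * P c m else 0).
    by case: ifP => _; rewrite ?mulr0 //; ring.
  by apply=> i j Pij; rewrite !mxE (offsupp_neq Pcm Pij) mulr0.
have := dir 1; have := dir (-1); rewrite normrN normr1 !mul1r mulN1r ler_norml.
by move=> *; apply/andP; split; lra.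
Qed.

Lemma gradP_row_parallel c m l : 0 < P c m -> 0 < P c l ->
  P c l * gradP c m = P c m * gradP c l.
Proof.
have dir m' l' :
    0 < P c m' -> 0 < P c l' -> 0 <= P c l' * gradP c m' - P c m' * gradP c l'.
  move=> Pm Pl.
  (* This direction leaves the norm of row [c] of [P] stationary. *)
  have := @dJ_dirP_supp_ge0 (P c l' *: delta_mx c m' + (- P c m') *: delta_mx c l').
  rewrite frob_dotDr !frob_dotZr !frob_dot_delta mulNr big1 ?mulr0 ?addr0 => [|a _].
    by apply=> i j Pij; rewrite !mxE (offsupp_neq Pm Pij) (offsupp_neq Pl Pij) !mulr0 addr0.
  rewrite mulmxDl [(_ *: delta_mx _ _ *m P^T + _) a a]mxE !delta_mul_trP_diag.
  case: ifP => _ //; case: (a == c); rewrite ?addr0 ?normr0 //.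
  by rewrite [P c l' * _]mulrC mulNr subrr normr0.
by move=> Pm Pl; have := dir m l Pm Pl; have := dir l m Pl Pm; lra.
Qed.

(* By [gradP_row_parallel], a row [a] of [gradP] with [L a a = 0] is a
   multiple of [P a], and [P a] has unit norm; [- 2 * gamma * tau 0 a] is the
   factor (read off as the inner product with [P a]); when [gamma = 0] the row
   vanishes and [x / 0 = 0] gives [tau 0 a = 0]. *)
Definition tau : 'rV[R]_k :=
  \row_a (if L a a == 0 then - (gradP *m P^T) a a / (2 * gamma) else 0).

Lemma row_normsq_eq1 a : L a a = 0 -> \sum_j P a j * P a j = 1.
Proof.
move/eqP; rewrite !mxE eqxx mulr1n subr_eq0 => /eqP <-.
by apply: eq_bigr => j _; rewrite mxE.
Qed.

Lemma gradP_tau c m : 0 < P c m -> gradP c m + 2 * gamma * tau 0 c * P c m = 0.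
Proof.
move=> Pcm; have := gradP_bound Pcm; rewrite [tau 0 c]mxE.
have [Lcc|_] := eqVneq (L c c) 0; last first.
  by rewrite normr_le0 => /eqP->; rewrite !mulr0 mul0r addr0.
have [->|g0] := eqVneq gamma 0.
  by rewrite mulr0 !mul0r normr_le0 => /eqP->; rewrite addr0.
have rowE : (gradP *m P^T) c c * P c m = gradP c m.
  rewrite -[RHS]mulr1 -(row_normsq_eq1 Lcc) mxE !mulr_sumr mulr_suml.
  apply: eq_bigr => j _; rewrite [P^T _ _]mxE.
  have := P_ge0 c j; rewrite le_eqVlt => /orP[/eqP<-|Pcj]; first by rewrite !(mulr0, mul0r).
  by rewrite mulrAC [gradP c j * _]mulrC (gradP_row_parallel Pcj Pcm); ring.
move=> _; rewrite -rowE; field.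
by rewrite g0.
Qed.

Lemma tau_le1 a : L a a = 0 -> `|tau 0 a| <= 1.
Proof.
move=> Laa; rewrite [tau 0 a]mxE Laa eqxx.
have [->|g0] := eqVneq gamma 0; first by rewrite mulr0 invr0 mulr0 normr0 ler01.
have g2 : 0 < 2 * gamma by rewrite mulr_gt0 // lt_neqAle eq_sym g0.
rewrite normrM normrN normfV (gtr0_norm g2) ler_pdivrMr // mul1r.
rewrite mxE; apply: le_trans (ler_norm_sum _ _ _) _.
have -> : 2 * gamma = 2 * gamma * \sum_j P a j * P a j by rewrite row_normsq_eq1 // mulr1.
rewrite mulr_sumr; apply: ler_sum => j _.
rewrite [P^T _ _]mxE normrM (ger0_norm (P_ge0 a j)) mulrA.
have := P_ge0 a j; rewrite le_eqVlt => /orP[/eqP<-|Paj]; first by rewrite !mulr0.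
by apply: (ler_wpM2r (ltW Paj)); have := gradP_bound Paj; rewrite Laa eqxx.
Qed.

Definition muA : 'M[R]_(N, k) := - (misfit_grad *m P^T + alpha *: const_mx 1).

Definition lamL : 'M[R]_k := lamL0 + diag_mx tau.

Definition muP : 'M[R]_(k, M) :=
  - (gradP + gamma *: ((diag_mx tau + (diag_mx tau)^T) *m P)).

Lemma stationarity_A :
  0 = 2%:R *: (A *m P *m P^T) - 2%:R *: (Y *m P^T) + muA + alpha *: const_mx 1.
Proof.
have -> : 2%:R *: (A *m P *m P^T) - 2%:R *: (Y *m P^T) = misfit_grad *m P^T.
  by rewrite /misfit_grad -scalemxAl mulmxBl scalerBr.
by rewrite /muA opprD addrA subrr add0r addNr.
Qed.

Lemma muA_fixed c1 : 0 < c1 -> muA = min0 c1 muA A.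
Proof.
move=> c1_gt0; apply/matrixP => i j; rewrite [RHS]mxE.
have -> : muA i j = - ((misfit_grad *m P^T) i j + alpha).
  rewrite /muA mxE [(_ + _ : 'M_(N, k)) i j]mxE [(_ *: _ : 'M_(N, k)) i j]mxE.
  by rewrite [const_mx _ _ _]mxE mulr1.
apply: min0_fixed => //; first by have := gradA_alpha_ge0 i j; lra.
by move=> Aij; rewrite gradA_alpha_eq0 ?oppr0.
Qed.

Lemma stationarity_P :
  0 = - (2%:R *: (A^T *m Y)) + (2%:R *: (A^T *m A *m P)) + muP + nu *: const_mx 1
      + gamma *: ((lamL + lamL^T) *m P).
Proof.
have -> : - (2%:R *: (A^T *m Y)) + 2%:R *: (A^T *m A *m P) = A^T *m misfit_grad.
  by rewrite /misfit_grad -scalemxAr mulmxBr mulmxA scalerBr addrC.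
have -> : (lamL + lamL^T) *m P =
    (lamL0 + lamL0^T) *m P + (diag_mx tau + (diag_mx tau)^T) *m P.
  by rewrite /lamL linearD /= addrACA mulmxDl.
by rewrite /muP /gradP; apply/matrixP => i j; rewrite !mxE; ring.
Qed.

Lemma lamL_fixed c2 : 0 < c2 -> lamL = proj_box c2 lamL L.
Proof.
move=> c2_gt0; apply/matrixP => a b; rewrite [RHS]mxE.
have lamLE : lamL a b =
    (if L a b == 0 then (a != b)%:R else Num.sg (L a b)) + tau 0 a *+ (a == b).
  by rewrite /lamL [(lamL0 + _) a b]mxE [lamL0 a b]mxE [diag_mx _ _ _]mxE.
have [Lab|Lab] := eqVneq (L a b) 0.
  rewrite Lab; apply: proj_zero_fixed; rewrite lamLE Lab eqxx.
  case: (eqVneq a b) Lab => [<- Laa|_ _]; last by rewrite addr0 normr1.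
  by rewrite add0r mulr1n tau_le1.
have -> : lamL a b = Num.sg (L a b).
  rewrite lamLE (negbTE Lab); case: (eqVneq a b) Lab => [<- Laa|_ _]; last by rewrite addr0.
  by rewrite mulr1n [tau 0 a]mxE (negbTE Laa) addr0.
exact: proj_sg_fixed.
Qed.

Lemma muP_fixed c1 : 0 < c1 -> muP = min0 c1 muP P.
Proof.
move=> c1_gt0; apply/matrixP => c m; rewrite [RHS]mxE.
have tauE :
    (diag_mx tau + (diag_mx tau)^T) *m P = \matrix_(i, j) (2 * tau 0 i * P i j).
  by apply/matrixP => i j; rewrite tr_diag_mx mulmxDl mul_diag_mx !mxE; ring.
have -> : muP c m = - (gradP c m + 2 * gamma * tau 0 c * P c m).
  rewrite /muP tauE mxE [(_ + _ : 'M_(k, M)) c m]mxE [(_ *: _ : 'M_(k, M)) c m]mxE.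
  by rewrite [(\matrix_(i, j) _) c m]mxE !mulrA [gamma * 2]mulrC.
apply: min0_fixed => //; last by move=> /gradP_tau->; rewrite oppr0.
have := P_ge0 c m; rewrite le_eqVlt => /orP[/eqP Pcm|/gradP_tau->]; last by rewrite oppr0.
by rewrite -Pcm mulr0 addr0 oppr_le0 gradP_ge0_offsupp.
Qed.

End LocalMinimizer.

Theorem theorem5 (R : realType) (N M k : nat) (Y : 'M[R]_(N, M))
  (alpha nu gamma : R) (A : 'M[R]_(N, k)) (P : 'M[R]_(k, M)) :
  (1 <= k)%N -> 0 <= alpha -> 0 <= nu -> 0 <= gamma ->
  local_minimizer Y alpha nu gamma A P ->
  forall c1 c2 : R, 0 < c1 -> 0 < c2 ->
  exists (L : 'M[R]_k) (muA lamA : 'M[R]_(N, k)) (muP lamP : 'M[R]_(k, M))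
         (lamL : 'M[R]_k),
    0 = (2%:R *: (A *m P *m P^T)) - (2%:R *: (Y *m P^T)) + muA + alpha *: lamA
     /\ lamA = proj_box c2 lamA A
     /\ muA = min0 c1 muA A
     /\ 0 = - (2%:R *: (A^T *m Y)) + (2%:R *: (A^T *m A *m P)) + muP + nu *: lamP
            + gamma *: ((lamL + lamL^T) *m P)
     /\ lamP = proj_box c2 lamP P
     /\ L = P *m P^T - 1%:M
     /\ lamL = proj_box c2 lamL L
     /\ muP = min0 c1 muP P.
Proof.
move=> _ alpha_ge0 nu_ge0 gamma_ge0 APmin c1 c2 c1_gt0 c2_gt0.
have [A_ge0 [P_ge0 _]] := APmin.
exists (P *m P^T - 1%:M), (muA Y alpha A P), (const_mx 1),
  (muP Y nu gamma A P), (const_mx 1), (lamL Y nu gamma A P).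
split; first exact: stationarity_A.
split; first exact: proj_box_const1.
split; first exact (muA_fixed alpha_ge0 nu_ge0 gamma_ge0 APmin c1_gt0).
split; first exact: stationarity_P.
split; first exact: proj_box_const1.
split; first by [].
split; first exact (lamL_fixed alpha_ge0 nu_ge0 gamma_ge0 APmin c2_gt0).
exact (muP_fixed alpha_ge0 nu_ge0 gamma_ge0 APmin c1_gt0).
Qed.
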